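(* Let $n\ge1$, $q$ a prime power, and $\mathcal{F}$ a covering of $[n]$ with no redundant basic set and with exactly two connected components. Then the $\mathcal{F}$-combinatorial metric satisfies the MacWilliams Extension Property if and only if $\mathcal{F}$ is a $k$-partition of $[n]$ for some $k$.
   Context: For a covering $\mathcal{F}$ of $[n]$ (subsets called basic sets, union $[n]$) and $x\in\mathbb{F}_q^n$, $\mathrm{wt}_{\mathcal{F}}(x)=\min\{|\mathcal{A}|:\mathcal{A}\subset\mathcal{F},\ \mathrm{supp}(x)\subset\bigcup_{A\in\mathcal{A}}A\}$ with $\mathrm{supp}(x)=\{i:x_i\ne0\}$, and $d_{\mathcal{F}}(x,y)=\mathrm{wt}_{\mathcal{F}}(x-y)$. A basic set is redundant if properly contained in another. $\mathcal{F}$ is a $k$-partition if it is a partition of $[n]$ with all blocks of cardinality $k$. A subfamily $\mathcal{S}\subset\mathcal{F}$ is connected if it cannot be written as $\mathcal{A}\cup\mathcal{B}$ with $\mathcal{A},\mathcal{B}$ nonempty and $A\cap B=\emptyset$ for all $A\in\mathcal{A},B\in\mathcal{B}$; connected components are maximal connected subfamilies. A local $\mathcal{F}$-equivalence between linear codes $\mathcal{C}_1,\mathcal{C}_2\subset\mathbb{F}_q^n$ is a linear map $t:\mathcal{C}_1\to\mathcal{C}_2$ preserving $\mathrm{wt}_{\mathcal{F}}$. The metric satisfies the MacWilliams Extension Property if for all linear codes $\mathcal{C}_1,\mathcal{C}_2$ every local $\mathcal{F}$-equivalence $t$ extends to a linear isometry $T$ of $(\mathbb{F}_q^n,d_{\mathcal{F}})$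 with $T|_{\mathcal{C}_1}=t$. *)

From HB Require Import structures.
From mathcomp Require Import all_boot all_order all_algebra.
Set Implicit Arguments. Unset Strict Implicit. Unset Printing Implicit Defensive.
Import GRing.Theory.
Local Open Scope ring_scope.

Section CombMetric.
Variables (K : finFieldType) (n : nat).

Definition supp (x : 'rV[K]_n) : {set 'I_n} := [set i | x 0 i != 0].

Definition is_covering (F : {set {set 'I_n}}) : bool := cover F == [set: 'I_n].

Definition no_redundant (F : {set {set 'I_n}}) : bool :=
  [forall A in F, forall B in F, ~~ (A \proper B)].

(* F-weight: min #|A| over subfamilies A of F covering supp x.
   (The default value #|F| is attained by A = F when F is a covering.) *)
Definition wtF (F : {set {set 'I_n}}) (x : 'rV[K]_n) : nat :=
  \big[minn/#|F|]_(A : {set {set 'I_n}} |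
        (A \subset F) && (supp x \subset \bigcup_(B in A) B)) #|A|.

Definition dF (F : {set {set 'I_n}}) (x y : 'rV[K]_n) : nat := wtF F (x - y).

Definition connectedF (S : {set {set 'I_n}}) : bool :=
  ~~ [exists A : {set {set 'I_n}}, exists B : {set {set 'I_n}},
        [&& A != set0, B != set0, A :|: B == S &
           [forall a in A, forall b in B, [disjoint a & b]]]].

Definition components (F : {set {set 'I_n}}) : {set {set {set 'I_n}}} :=
  [set S | maxset (fun S => (S \subset F) && connectedF S) S].

Definition k_partition (k : nat) (F : {set {set 'I_n}}) : Prop :=
  partition F [set: 'I_n] /\ forall B, B \in F -> #|B| = k.

(* t : C1 -> C2 is a local F-equivalence (t is given as a function on K^n,
   only its restriction to C1 matters). *)
Definition local_equiv (F : {set {set 'I_n}}) (C1 C2 : {vspace 'rV[K]_n})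
    (t : 'rV[K]_n -> 'rV[K]_n) : Prop :=
  [/\ forall x, x \in C1 -> t x \in C2,
      forall (a : K) x y, x \in C1 -> y \in C1 -> t (a *: x + y) = a *: t x + t y &
      forall x, x \in C1 -> wtF F (t x) = wtF F x].

Definition linear_isometry (F : {set {set 'I_n}}) (T : 'rV[K]_n -> 'rV[K]_n) : Prop :=
  [/\ forall (a : K) x y, T (a *: x + y) = a *: T x + T y,
      bijective T &
      forall x y, dF F (T x) (T y) = dF F x y].

Definition MacWilliams_EP (F : {set {set 'I_n}}) : Prop :=
  forall (C1 C2 : {vspace 'rV[K]_n}) (t : 'rV[K]_n -> 'rV[K]_n),
    local_equiv F C1 C2 t ->
    exists T, linear_isometry F T /\ forall x, x \in C1 -> T x = t x.

End CombMetric.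

(* If two distinct blocks A and B of one component overlap and c lies in the other
   component, then x = 1_(A u B) and y = 1_A + e_c both have weight 2, so the extension
   property yields an isometry T with T x = y. For each of the three sets Z = A \ B, B \ A
   and A, both -1_Z and x - 1_Z have weight 1, hence so do T (-1_Z) and y + T (-1_Z); a
   vector of weight 1 lives on one side of the component, which forces T (-1_Z) to be -1_A
   or -e_c, contradicting the injectivity of T. So the blocks are pairwise disjoint and
   F = {B, ~B}, where the weight of v only records whether v is 0, is supported in a single
   block, or neither. An isometry mapping e_d (d outside B) to e_b (b in B) then embeds the
   vectors supported on ~B into those supported on B, so |~B| <= |B|, and symmetrically.
   Conversely, when |B| = |~B|, a local equivalence t on C either keeps or swaps the two
   blocks; on each block the map induced by t on C extends, by completing bases, to a linear
   isomorphism onto the corresponding block, and the sum of the two is the isometry. *)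

From HB Require Import structures.
From mathcomp Require Import all_boot all_order all_algebra finfield.

Set Implicit Arguments. Unset Strict Implicit. Unset Printing Implicit Defensive.
Import Order.TTheory GRing.Theory.
Local Open Scope ring_scope.

(** * Connected components *)

Lemma no_redundant_eq n (F : {set {set 'I_n}}) X Y :
  no_redundant F -> X \in F -> Y \in F -> X \subset Y -> X = Y.
Proof.
move=> /forall_inP nrF XF YF sXY; apply/eqP; rewrite eqEsubset sXY /=.
by move/forall_inP: (nrF X XF) => /(_ Y YF); rewrite properE sXY negbK.
Qed.

Lemma no_redundant_set0 n (F : {set {set 'I_n}}) D :
  no_redundant F -> D \in F -> D != set0 -> set0 \notin F.
Proof.
move=> nrF DF D0; apply/negP => F0.
by move: D0; rewrite -(no_redundant_eq nrF F0 DF (sub0set D)) eqxx.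
Qed.

Lemma exists_nonempty_block n (F : {set {set 'I_n}}) :
  (0 < n)%N -> is_covering F -> exists2 D, D \in F & D != set0.
Proof.
move=> n_gt0 /eqP covF; have : Ordinal n_gt0 \in cover F by rewrite covF inE.
by case/bigcupP => D DF iD; exists D => //; apply/set0Pn; exists (Ordinal n_gt0).
Qed.

Section Components.
Variables (n : nat) (F : {set {set 'I_n}}).
Implicit Types (S : {set {set 'I_n}}) (D : {set 'I_n}).

Lemma connectedFPn S :
  reflect (exists A B : {set {set 'I_n}}, [/\ A != set0, B != set0, A :|: B = S &
             {in A & B, forall a b : {set 'I_n}, [disjoint a & b]}])
          (~~ connectedF S).
Proof.
rewrite /connectedF negbK; apply: (iffP existsP) => [[A /existsP[B]] | [A [B [A0 B0 AB dis]]]].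
  case/and4P=> A0 B0 /eqP AB /forall_inP dis; exists A, B; split=> // a b aA bB.
  by move/forall_inP: (dis a aA); apply.
exists A; apply/existsP; exists B; rewrite A0 B0 AB eqxx /=.
by apply/forall_inP => a aA; apply/forall_inP => b bB; apply: dis.
Qed.

Lemma connectedF1 D : D != set0 -> connectedF [set D].
Proof.
move=> D0; apply/connectedFPn => -[A [B [A0 B0 AB dis]]].
have memD (X : {set {set 'I_n}}) : X \subset [set D] -> X != set0 -> D \in X.
  by rewrite subset1 => /orP[/eqP->|/eqP->]; rewrite ?set11 ?eqxx.
have DA : D \in A by rewrite memD // -AB subsetUl.
have DB : D \in B by rewrite memD // -AB subsetUr.
by move: D0; have := dis D D DA DB; rewrite -setI_eq0 setIid => /eqP ->; rewrite eqxx.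
Qed.

Lemma connectedF_trivIset S : connectedF S -> trivIset S -> (#|S| <= 1)%N.
Proof.
move=> Sconn /trivIsetP Striv; rewrite leqNgt; apply/negP => /card_gt1P[a [b [aS bS neqab]]].
suff /negP[] : ~~ connectedF S by [].
apply/connectedFPn; exists [set a], (S :\ a); split.
- by apply/set0Pn; exists a; rewrite set11.
- by apply/set0Pn; exists b; rewrite !inE eq_sym neqab.
- by rewrite setD1K.
by move=> _ b' /set1P-> /setD1P[neqb'a b'S]; apply: Striv; rewrite // eq_sym.
Qed.

Lemma connectedF_setU1 S D D' :
  connectedF S -> D \in S -> ~~ [disjoint D & D'] -> connectedF (D' |: S).
Proof.
move=> Sconn DS meetDD'; apply/connectedFPn => -[A [B [A0 B0 AB dis]]].
wlog DA : A B A0 B0 AB dis / D \in A => [hyp|].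
  have : D \in A :|: B by rewrite AB setU1r.
  case/setUP => [DA|DB]; first exact: (hyp A B).
  apply: (hyp B A) => //; first by rewrite setUC.
  by move=> b a bB aA; rewrite disjoint_sym dis.
have D'A : D' \in A.
  have : D' \in A :|: B by rewrite AB setU11.
  by case/setUP => // D'B; case/negP: meetDD'; apply: dis.
have [b bB] := set0Pn _ B0.
have bS : b \in S.
  have : b \in D' |: S by rewrite -AB inE bB orbT.
  case/setU1P => [eqbD'|//]; subst b.
  have := dis _ _ D'A bB; rewrite -setI_eq0 setIid => /eqP D'0.
  by move: meetDD'; rewrite D'0 -setI_eq0 setI0 eqxx.
suff /negP[] : ~~ connectedF S by [].
apply/connectedFPn; exists (A :&: S), (B :&: S); split.
- by apply/set0Pn; exists D; rewrite inE DA DS.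
- by apply/set0Pn; exists b; rewrite inE bB bS.
- by rewrite -setIUl AB; apply/setIidPr/subsetUr.
by move=> a b' /setIP[aA _] /setIP[b'B _]; apply: dis.
Qed.

Lemma components_connected S : S \in components F -> (S \subset F) && connectedF S.
Proof. by rewrite inE => /maxsetP[]. Qed.

Lemma components_maximal S S' :
  S \in components F -> S' \subset F -> connectedF S' -> S \subset S' -> S' = S.
Proof. by rewrite inE => /maxsetP[_ maxS] S'F S'conn; apply: maxS; rewrite S'F. Qed.

Lemma mem_components D : D \in F -> D != set0 -> exists2 S, S \in components F & D \in S.
Proof.
move=> DF D0; have P1 : ([set D] \subset F) && connectedF [set D].
  by rewrite sub1set DF connectedF1.
have [S maxS DS] := @maxset_exists _ (fun S => (S \subset F) && connectedF S) _ P1.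
by exists S; rewrite ?inE // -sub1set.
Qed.

Lemma component_disjoint S D D' :
  S \in components F -> D \in S -> D' \in F -> D' \notin S -> [disjoint D & D'].
Proof.
move=> SC DS D'F; apply: contraR => meetDD'.
have /andP[SF Sconn] := components_connected SC.
rewrite -(components_maximal SC _ (connectedF_setU1 Sconn DS meetDD')) ?setU11 ?subsetUr //.
by rewrite subUset sub1set D'F.
Qed.

Lemma component_cover_compl S D :
  S \in components F -> D \in F -> D \notin S -> D \subset ~: cover S.
Proof.
move=> SC DF DS; rewrite -disjoints_subset; apply: bigcup_disjoint => D' D'S.
by rewrite disjoint_sym (component_disjoint SC).
Qed.

Lemma components_trivIset : F != set0 -> set0 \notin F -> trivIset F ->
  components F = [set [set D] | D in F].
Proof.
move=> F0 F0n trivF; have nonempty D : D \in F -> D != set0.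
  by move=> DF; apply: contraNneq F0n => <-.
apply/setP => S; apply/idP/imsetP => [SC | [D DF ->]]; last first.
  rewrite inE; apply/maxsetP; split => [|S' /andP[S'F S'conn] sDS'].
    by rewrite sub1set DF connectedF1 ?nonempty.
  apply/eqP; rewrite eq_sym eqEcard sDS' cards1.
  exact: connectedF_trivIset S'conn (trivIsetS S'F trivF).
have /andP[SF Sconn] := components_connected SC.
have S0 : S != set0.
  apply/negP => /eqP S0; have [D DF] := set0Pn _ F0.
  have := components_maximal SC (S' := [set D]).
  rewrite sub1set DF connectedF1 ?nonempty // S0 sub0set => /(_ isT isT isT)/setP/(_ D).
  by rewrite !inE eqxx.
have /cards1P[D eS] : #|S| == 1%N.
  by rewrite eqn_leq connectedF_trivIset ?(trivIsetS SF) // card_gt0.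
by exists D; rewrite // -sub1set -eS.
Qed.

End Components.

Lemma trivIset_two_components n (F : {set {set 'I_n}}) :
  is_covering F -> F != set0 -> set0 \notin F -> trivIset F -> #|components F| = 2 ->
  exists B, F = [set B; ~: B].
Proof.
move=> covF F0 F0n trivF; rewrite components_trivIset // card_imset; last exact: set1_inj.
move/eqP/cards2P => [B1 [B2 [neqB12 eF]]]; exists B1; rewrite eF; congr [set B1; _].
have dis : [disjoint B1 & B2].
  by move/trivIsetP: trivF; apply; rewrite // eF !inE eqxx ?orbT.
apply/setP => i; rewrite inE.
have : i \in cover F by rewrite (eqP covF) inE.
rewrite eF /cover bigcup_setU !big_set1 inE.
by case/orP => iB; [rewrite iB (disjointFr dis) | rewrite iB (disjointFl dis)].
Qed.

Section Weight.
Variables (K : finFieldType) (n : nat) (F : {set {set 'I_n}}).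
Implicit Types (x y : 'rV[K]_n) (A : {set {set 'I_n}}) (D : {set 'I_n}).

Lemma in_supp x i : (i \in supp x) = (x 0 i != 0).
Proof. by rewrite inE. Qed.

Lemma supp_eq0 x : (supp x == set0) = (x == 0).
Proof.
apply/eqP/eqP => [x0|->]; last by apply/setP => i; rewrite in_supp mxE eqxx inE.
by apply/rowP => i; rewrite mxE; apply/eqP/negPn; rewrite -in_supp x0 inE.
Qed.

Lemma suppZ (a : K) x : a != 0 -> supp (a *: x) = supp x.
Proof. by move=> a0; apply/setP => i; rewrite !in_supp mxE mulf_eq0 negb_or a0. Qed.

Lemma suppN x : supp (- x) = supp x.
Proof. by apply/setP => i; rewrite !in_supp mxE oppr_eq0. Qed.

Lemma wtF_supp x y : supp x = supp y -> wtF F x = wtF F y.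
Proof. by rewrite /wtF => ->. Qed.

Lemma wtF_le x A : A \subset F -> supp x \subset cover A -> (wtF F x <= #|A|)%N.
Proof. by move=> AF sxA; rewrite /wtF -minEnat -leEnat bigmin_le_cond // AF. Qed.

Hypothesis covF : is_covering F.

Lemma wtF_witness x :
  exists2 A : {set {set 'I_n}}, (A \subset F) && (supp x \subset cover A) & wtF F x = #|A|.
Proof.
have PF : (F \subset F) && (supp x \subset cover F).
  by move/eqP: covF => ->; rewrite subxx subsetT.
rewrite /wtF -minEnat.
have [A PA ->] := eq_bigmin F _ (fun A : {set {set 'I_n}} => #|A|) PF
  (fun A (PA : (A \subset F) && _) => subset_leq_card (proj1 (andP PA))).
by exists A.
Qed.

Lemma wtF_eq0 x : (wtF F x == 0%N) = (x == 0).
Proof.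
apply/idP/eqP => [|->]; last first.
  rewrite -leqn0 (leq_trans (wtF_le (A := set0) _ _)) ?cards0 ?sub0set //.
  by rewrite /cover big_set0 subset0 supp_eq0.
have [A /andP[_ sxA] ->] := wtF_witness x; rewrite cards_eq0 => /eqP A0.
by apply/eqP; rewrite -supp_eq0 -subset0; move: sxA; rewrite A0 /cover big_set0.
Qed.

Lemma wtF_le1P x : F != set0 ->
  reflect (exists2 D, D \in F & supp x \subset D) (wtF F x <= 1)%N.
Proof.
move=> F0; apply: (iffP idP) => [|[D DF sxD]]; last first.
  by rewrite -(cards1 D) wtF_le ?cover1 // sub1set.
have [A /andP[AF sxA] ->]:= wtF_witness x.
rewrite leq_eqVlt ltnS leqn0 cards_eq0 => /orP[/cards1P[D AD]|/eqP A0].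
  by exists D; [rewrite (subsetP AF) // AD set11 | rewrite -(cover1 D) -AD].
have /set0Pn[D0 D0F] := F0.
by exists D0 => //; move: sxA; rewrite A0 /cover big_set0 subset0 => /eqP ->; apply: sub0set.
Qed.

Lemma wtF_le2 x D1 D2 : D1 \in F -> D2 \in F -> supp x \subset D1 :|: D2 ->
  (wtF F x <= 2)%N.
Proof.
move=> D1F D2F sx; apply: leq_trans (wtF_le (A := [set D1; D2]) _ _) _.
- by apply/subsetP => D; rewrite !inE => /orP[]/eqP->.
- by rewrite /cover bigcup_setU !big_set1.
by rewrite cards2 ltnS leq_b1.
Qed.

End Weight.

Section Isometry.
Variables (K : finFieldType) (n : nat) (F : {set {set 'I_n}}) (T : 'rV[K]_n -> 'rV[K]_n).
Hypothesis isoT : linear_isometry F T.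

Lemma isometryD x y : T (x + y) = T x + T y.
Proof. by case: isoT => lin _ _; rewrite -[x]scale1r lin !scale1r. Qed.

Lemma isometry0 : T 0 = 0.
Proof. by apply/(addrI (T 0)); rewrite -isometryD !addr0. Qed.

Lemma isometry_wt x : wtF F (T x) = wtF F x.
Proof. by case: isoT => _ _ iso; have := iso x 0; rewrite /dF isometry0 !subr0. Qed.

Lemma isometry_inj : injective T.
Proof. by case: isoT => _ /bij_inj. Qed.

End Isometry.

Lemma MEP_wtF_transitive (K : finFieldType) n (F : {set {set 'I_n}}) (x y : 'rV[K]_n) :
  MacWilliams_EP K F -> x != 0 -> wtF F x = wtF F y ->
  exists T, linear_isometry F T /\ T x = y.
Proof.
move=> MEP; rewrite -supp_eq0 => /set0Pn[j]; rewrite in_supp => xj0 wxy.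
pose t (v : 'rV[K]_n) := (v 0 j / x 0 j) *: y.
have [|T [isoT eT]] := MEP <[x]>%VS <[y]>%VS t.
  split => [v _ | a u v _ _ | _ /vlineP[k ->]]; first by rewrite memvZ // memv_line.
    by rewrite /t !mxE mulrDl scalerDl scalerA mulrA.
  rewrite /t mxE mulfK //; have [->|k0] := eqVneq k 0; first by rewrite !scale0r.
  by rewrite (wtF_supp F (suppZ y k0)) (wtF_supp F (suppZ x k0)).
by exists T; rewrite eT ?memv_line // /t divff // scale1r.
Qed.

Section Restriction.
Variables (K : finFieldType) (n : nat).
Local Notation vec := 'rV[K]_n.
Implicit Types (X Y : {set 'I_n}) (x y w : vec).

Definition ind X : vec := \row_j (if j \in X then 1 else 0).

Definition restr X x : vec := \row_j (if j \in X then x 0 j else 0).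

Fact restr_is_linear X : linear (restr X).
Proof. by move=> a x y; apply/rowP => j; rewrite !mxE; case: (j \in X); rewrite ?mulr0 ?addr0. Qed.

HB.instance Definition _ X :=
  GRing.isLinear.Build K vec vec *:%R (restr X) (restr_is_linear X).

Lemma supp_ind X : supp (ind X) = X.
Proof. by apply/setP => j; rewrite in_supp mxE; case: (j \in X); rewrite ?oner_eq0 ?eqxx. Qed.

Lemma ind_inj : injective ind.
Proof. by move=> X Y eXY; rewrite -[X]supp_ind eXY supp_ind. Qed.

Lemma ind_eq0 X : (ind X == 0) = (X == set0).
Proof. by rewrite -supp_eq0 supp_ind. Qed.

Lemma indB X Y : Y \subset X -> ind X - ind Y = ind (X :\: Y).
Proof.
move=> /subsetP sYX; apply/rowP => j; rewrite !mxE !inE.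
by case: (boolP (j \in Y)) => [/sYX -> | _]; rewrite ?subrr ?subr0.
Qed.

Lemma supp_restr X x : supp (restr X x) = X :&: supp x.
Proof. by apply/setP => j; rewrite !inE mxE; case: (j \in X); rewrite ?eqxx. Qed.

Lemma restr_ind X Y : restr X (ind Y) = ind (X :&: Y).
Proof. by apply/rowP => j; rewrite !mxE inE; case: (j \in X). Qed.

Lemma restr_id X x : supp x \subset X -> restr X x = x.
Proof.
move=> /subsetP sxX; apply/rowP => j; rewrite mxE; case: ifP => // /negbT jX.
by apply/esym/eqP; apply: contraNT jX => xj; rewrite sxX ?in_supp.
Qed.

Lemma restr_eq0 X x : (restr X x == 0) = (supp x \subset ~: X).
Proof. by rewrite -supp_eq0 supp_restr setI_eq0 disjoint_sym disjoints_subset. Qed.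

Lemma restr_add_compl X x : restr X x + restr (~: X) x = x.
Proof. by apply/rowP => j; rewrite !mxE inE; case: (j \in X); rewrite ?addr0 ?add0r. Qed.

Lemma split_support_opp U y w :
  restr U y != 0 -> restr (~: U) y != 0 ->
  (supp w \subset U) || (supp w \subset ~: U) ->
  (supp (y + w) \subset U) || (supp (y + w) \subset ~: U) ->
  w = - restr U y \/ w = - restr (~: U) y.
Proof.
wlog wU : U / supp w \subset U => [hyp yU yUC sw syw|].
  case/orP: (sw) => [wU|wUC]; first exact: hyp.
  have := hyp (~: U) wUC yUC; rewrite setCK => /(_ yU).
  by rewrite orbC sw orbC => /(_ isT syw) [->|->]; [right | left].
move=> _ yUC _ syw; left.
have wUC : restr (~: U) w = 0 by apply/eqP; rewrite restr_eq0 setCK.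
have {syw} ywUC : supp (y + w) \subset ~: U.
  case/orP: syw => // syw.
  have : restr (~: U) (y + w) != 0 by rewrite linearD /= wUC addr0.
  by rewrite restr_eq0 setCK syw.
have : restr U (y + w) = 0 by apply/eqP; rewrite restr_eq0.
by rewrite linearD /= (restr_id wU) => /eqP; rewrite addrC addr_eq0 => /eqP.
Qed.

Lemma supp_delta j : supp (delta_mx 0 j : vec) = [set j].
Proof.
apply/setP => i; rewrite in_supp !inE mxE eqxx /=.
by case: (i == j); rewrite ?mulr1n ?mulr0n ?oner_eq0 ?eqxx.
Qed.

Definition supported X : {vspace vec} :=
  <<[tuple (delta_mx 0 (enum_val i))%R | i < #|X|]>>%VS.

Lemma mem_supported X x : (x \in supported X) = (supp x \subset X).
Proof.
apply/idP/idP => [xX | /subsetP sxX].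
  suff /eqP : restr (~: X) x = 0 by rewrite restr_eq0 setCK.
  rewrite (coord_span xX) linear_sum big1 // => i _.
  apply/eqP; rewrite linearZ /= nth_mktuple scaler_eq0 restr_eq0 setCK supp_delta.
  by rewrite sub1set enum_valP orbT.
rewrite [x]row_sum_delta (bigID (mem X)) /= [X in _ + X]big1 ?addr0 => [|j jX].
  apply: rpred_sum => j jX; apply/rpredZ/memv_span/(nthP 0).
  by exists (enum_rank_in jX j); rewrite ?size_tuple // nth_mktuple enum_rankK_in.
apply/eqP; rewrite scaler_eq0; apply/orP; left; apply: contraNT jX.
by rewrite -in_supp => /sxX.
Qed.

Lemma dim_supported X : \dim (supported X) = #|X|.
Proof.
suff /eqnP -> : free [tuple (delta_mx 0 (enum_val i) : vec) | i < #|X|] by rewrite size_tuple.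
apply/freeP => k k0 i; have := congr1 (fun v : vec => v 0 (enum_val i)) k0.
rewrite summxE (bigD1 i) //= big1 ?addr0 => [|l li].
  by rewrite nth_mktuple !mxE !eqxx mulr1 => ->.
by rewrite nth_mktuple !mxE (inj_eq enum_val_inj) eq_sym (negPf li) andbF mulr0.
Qed.

End Restriction.
Arguments supported {K n}.
Arguments ind {K n}.

(** * Extending partial linear maps *)

Section LinearExtension.
Variables (K : fieldType) (vT : vectType K).
Implicit Types (C U W : {vspace vT}) (f g h : 'End(vT)).

Definition linear_on C (t : vT -> vT) :=
  forall (a : K) x y, x \in C -> y \in C -> t (a *: x + y) = a *: t x + t y.

Lemma linear_on_sum C t I (r : seq I) (k : I -> K) (v : I -> vT) :
  linear_on C t -> (forall i, v i \in C) ->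
  t (\sum_(i <- r) k i *: v i) = \sum_(i <- r) k i *: t (v i).
Proof.
move=> tlin vC; elim: r => [|i r IHr]; last first.
  by rewrite !big_cons tlin ?IHr // rpred_sum // => j _; apply: rpredZ.
rewrite !big_nil; apply/(addrI (t 0)); rewrite addr0 -{1}(scale1r (t 0)) -tlin ?mem0v //.
by rewrite scaler0 addr0.
Qed.

Lemma linear_on_extend C t : linear_on C t -> exists f : 'End(vT), {in C, f =1 t}.
Proof.
move=> tlin; pose X := vbasis C.
have XC (i : 'I_(\dim C)) : X`_i \in C by apply/vbasis_mem/mem_nth; rewrite size_tuple.
have [f /(_ (basis_free (vbasisP C)))] := linear_of_free X (map t X).
rewrite size_map => /(_ erefl) /eq_in_map fX.
exists (linfun f) => x /coord_vbasis ->.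
rewrite lfunE linear_sum (linear_on_sum _ _ tlin) //; apply: eq_bigr => i _.
by rewrite linearZ /= fX // mem_nth ?size_tuple.
Qed.

Lemma extend_basis U W X : (U <= W)%VS -> basis_of U X ->
  basis_of W (X ++ vbasis (W :\: U)).
Proof.
move=> sUW bX; rewrite -{1}(addv_diff_cap W U) (capv_idPr sUW) addvC.
by apply: cat_basis (vbasisP _) => //; apply/directv_addP; rewrite capvC capv_diff.
Qed.

Lemma lker_cap0_eq0 W g : (W :&: lker g = 0)%VS -> {in W, forall w, (g w == 0) = (w == 0)}.
Proof.
move=> WK w wW; apply/eqP/eqP => [gw0|->]; last exact: linear0.
by apply/eqP; rewrite -memv0 -WK memv_cap wW memv_ker gw0 eqxx.
Qed.

Lemma extend_injective U W W' g0 :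
  (U <= W)%VS -> (U :&: lker g0 = 0)%VS -> (g0 @: U <= W')%VS -> \dim W = \dim W' ->
  exists g : 'End(vT), [/\ {in U, g =1 g0}, (g @: W = W')%VS & (W :&: lker g = 0)%VS].
Proof.
move=> sUW Uker0 sgUW' dimWW'.
pose X := vbasis U; pose Y := map g0 X.
have bX : basis_of U X := vbasisP U.
have bY : basis_of (g0 @: U) Y := limg_basis_of Uker0 bX.
have bW := extend_basis sUW bX; have bW' := extend_basis sgUW' bY.
have [g /(_ (basis_free bW))] :=
  linear_of_free (X ++ vbasis (W :\: U)) (Y ++ vbasis (W' :\: g0 @: U)).
rewrite -(eqnP (basis_free bW)) -(eqnP (basis_free bW')) (span_basis bW) (span_basis bW').
rewrite -dimWW' => /(_ erefl) gW.
have gX : map g X = Y.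
  by move/eqP: gW; rewrite map_cat eqseq_cat ?size_map // => /andP[/eqP].
have gW' : (linfun g @: W)%VS = W'.
  rewrite -(span_basis bW) -(span_basis bW') limg_span -gW.
  by congr <<_>>%VS; apply: eq_map => v; rewrite lfunE.
exists (linfun g); split=> //.
  move=> u; rewrite -(span_basis bX) => /coord_span ->; rewrite !linear_sum.
  apply: eq_bigr => i _; rewrite !linearZ /= lfunE; congr (_ *: _).
  by move/eq_in_map: gX => -> //; rewrite mem_nth ?size_tuple.
apply/eqP; rewrite -dimv_eq0 -(eqn_add2r (\dim (linfun g @: W))) limg_ker_dim gW'.
by rewrite dimWW'.
Qed.

Lemma factor_on C f h : {in C, forall x, (f x == 0) = (h x == 0)} ->
  exists g0 : 'End(vT), [/\ {in C, forall x, g0 (f x) = h x},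
    (f @: C :&: lker g0 = 0)%VS & (g0 @: (f @: C) = h @: C)%VS].
Proof.
(* fC^-1 picks a preimage in C of each vector of f @: C; as f and h have the same kernel
   on C, the value of h on that preimage does not depend on the choice. *)
move=> fh; pose fC := (f \o projv C)%VF; pose g0 := (h \o projv C \o fC^-1)%VF.
have g0f : {in C, forall x, g0 (f x) = h x}.
  move=> x xC; have : fC x \in limg fC := memv_img fC (memvf x).
  rewrite comp_lfunE projv_id // => /limg_lfunVK; rewrite comp_lfunE => fy.
  apply/eqP; rewrite !comp_lfunE -subr_eq0 -linearB -fh ?rpredB ?memv_proj // linearB /=.
  by rewrite fy subrr.
exists g0; split=> //; last first.
  by rewrite -limg_comp; apply: eq_in_limg => x xC; rewrite comp_lfunE g0f.
apply/eqP; rewrite -subv0; apply/subvP => v; rewrite memv_cap memv_ker.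
by case/andP => /memv_imgP[x xC ->]; rewrite g0f // -fh // memv0.
Qed.

Lemma extend_factor C W W' f h :
  (f @: C <= W)%VS -> (h @: C <= W')%VS -> \dim W = \dim W' ->
  {in C, forall x, (f x == 0) = (h x == 0)} ->
  exists g : 'End(vT),
    [/\ {in C, forall x, g (f x) = h x}, (g @: W = W')%VS & (W :&: lker g = 0)%VS].
Proof.
move=> sfCW shCW' dimWW' fh.
have [g0 [g0f g0ker g0img]] := factor_on fh.
have [|g [gg0 gW gker]] := extend_injective sfCW g0ker _ dimWW'; first by rewrite g0img.
by exists g; split => // x xC; rewrite gg0 ?g0f ?memv_img.
Qed.

End LinearExtension.

(** * Two complementary blocks *)

Section ComplementaryBlocks.
Variables (K : finFieldType) (n : nat).
Local Notation vec := 'rV[K]_n.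
Implicit Types (B E X : {set 'I_n}) (u v x : vec).

Definition blk B (b : bool) := if b then B else ~: B.

Definition in_block B v := [exists b, v \in supported (blk B b)].

Lemma blkN B b : blk B (~~ b) = ~: blk B b.
Proof. by case: b; rewrite /= ?setCK. Qed.

Lemma blkC B b : blk (~: B) b = blk B (~~ b).
Proof. by case: b; rewrite /= ?setCK. Qed.

Lemma in_blockC B v : in_block (~: B) v = in_block B v.
Proof.
apply/existsP/existsP => -[b vb]; exists (~~ b); move: vb;
  by case: b; rewrite /= ?setCK.
Qed.

Lemma in_block_blk B b : in_block (blk B b) =1 in_block B.
Proof. by case: b => v //; apply: in_blockC. Qed.

Lemma supported_compl_eq0 X v :
  v \in supported X -> v \in supported (~: X) -> v = 0.
Proof.
rewrite !mem_supported => sX sXC; apply/eqP; rewrite -supp_eq0 -subset0.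
by rewrite -(setICr X) subsetI sX.
Qed.

Lemma eq0_supported X v : (v == 0) = [forall b, v \in supported (blk X b)].
Proof.
apply/eqP/forallP => [-> b|vb]; first exact: mem0v.
exact: supported_compl_eq0 (vb true) (vb false).
Qed.

Lemma restr_supported X x : restr X x \in supported X.
Proof. by rewrite mem_supported supp_restr subsetIl. Qed.

Lemma restr_eq0_supported X x : (restr X x == 0) = (x \in supported (~: X)).
Proof. by rewrite restr_eq0 mem_supported. Qed.

Lemma restr_add_supported X u v :
  u \in supported X -> v \in supported (~: X) -> restr X (u + v) = u.
Proof.
rewrite !mem_supported => uX vXC; have vX0 : restr X v = 0 by apply/eqP; rewrite restr_eq0.
by rewrite linearD /= (restr_id uX) vX0 addr0.
Qed.

Lemma covering_compl B : is_covering [set B; ~: B].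
Proof.
apply/eqP/setP => i; rewrite inE; apply/bigcupP.
by case: (boolP (i \in B)) => iB; [exists B | exists (~: B)]; rewrite ?inE ?eqxx ?orbT.
Qed.

Lemma wtF_le1_compl B v : (wtF [set B; ~: B] v <= 1)%N = in_block B v.
Proof.
have F0 : [set B; ~: B] != set0 by apply/set0Pn; exists B; rewrite !inE eqxx.
apply/(wtF_le1P (covering_compl B) v F0)/existsP => [[D]|[b vb]].
  by rewrite !inE => /orP[]/eqP-> sD; [exists true | exists false]; rewrite mem_supported.
exists (blk B b); last by rewrite -mem_supported.
by case: b {vb}; rewrite !inE eqxx ?orbT.
Qed.

Lemma wtF_compl B v :
  wtF [set B; ~: B] v = if v == 0 then 0%N else if in_block B v then 1%N else 2%N.
Proof.
have covB := covering_compl B.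
case: eqP => [->|/eqP v0]; first by apply/eqP; rewrite wtF_eq0.
have wt_gt0 : (0 < wtF [set B; ~: B] v)%N by rewrite lt0n wtF_eq0.
apply/eqP; rewrite -wtF_le1_compl; case: leqP => [wt_le1|wt_gt1].
  by rewrite eqn_leq wt_le1.
rewrite eqn_leq wt_gt1 (wtF_le2 (D1 := B) (D2 := ~: B)) ?setUCr ?subsetT //.
  by rewrite !inE eqxx.
by rewrite !inE eqxx orbT.
Qed.

Lemma in_block_add B b b' u v :
  u \in supported (blk B b) -> v \in supported (blk B b') -> u != 0 -> v != 0 ->
  in_block B (u + v) = (b == b').
Proof.
move=> ub vb' u0 v0; case: (eqVneq b b') vb' => [<- vb | neqbb' vb'].
  by apply/existsP; exists b; rewrite rpredD.
have eb' : b' = ~~ b by clear -neqbb'; case: b b' neqbb' => [] [].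
apply/existsP => -[c uvc].
have [eqcb|eqcb] : c = b \/ c = ~~ b by clear -b c; case: b c => [] []; auto.
  have vb : v \in supported (blk B b).
    by rewrite -(addKr u v); apply: rpredD; rewrite ?rpredN // -eqcb.
  by move: vb'; rewrite eb' blkN => /(supported_compl_eq0 vb) v_eq0; rewrite v_eq0 eqxx in v0.
have ub' : u \in supported (~: blk B b).
  by rewrite -(addrK v u) -blkN -eqcb; apply: rpredB; rewrite // eqcb -eb'.
by move: u0; rewrite (supported_compl_eq0 ub ub') eqxx.
Qed.

Lemma linear_isometry_compl B (T : 'End(vec)) :
  (forall v, (T v == 0) = (v == 0)) -> (forall v, in_block B (T v) = in_block B v) ->
  linear_isometry [set B; ~: B] T.
Proof.
move=> T0 Tblk; split => [a x y | | x y]; first exact: linearP.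
  by apply: injF_bij => x y /eqP; rewrite -subr_eq0 -linearB T0 subr_eq0 => /eqP.
by rewrite /dF -linearB !wtF_compl T0 Tblk.
Qed.

Section Alignment.
Variables (B : {set 'I_n}) (C : {vspace vec}) (t : 'End(vec)).
Hypothesis t_eq0 : {in C, forall x, (t x == 0) = (x == 0)}.
Hypothesis t_block : {in C, forall x, in_block B (t x) = in_block B x}.

Definition aligned E :=
  {in C, forall x b, x \in supported (blk B b) -> t x \in supported (blk E b)}.

Lemma misaligned_swap x b b' :
  x \in C -> x \in supported (blk B b) -> t x \notin supported (blk B b') ->
  [/\ x != 0, t x != 0 & t x \in supported (blk B (~~ b'))].
Proof.
move=> xC xb txb'; have tx0 : t x != 0 by apply: contraNneq txb' => ->; rewrite mem0v.
split => //; first by rewrite -t_eq0.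
have /existsP[c txc] : in_block B (t x) by rewrite t_block //; apply/existsP; exists b.
have [ecb'|necb'] := eqVneq c b'; first by rewrite -ecb' txc in txb'.
by rewrite (_ : ~~ b' = c) //; clear -necb'; case: c b' necb' => [] [].
Qed.

Lemma exists_aligned : exists s, aligned (blk B s).
Proof.
pose bad s (xb : vec * bool) := [&& xb.1 \in C, xb.1 \in supported (blk B xb.2)
  & t xb.1 \notin supported (blk (blk B s) xb.2)].
(* Witnesses against both alignments give x, y in C whose blocks t keeps for one and swaps
   for the other; then in_block_add makes x + y and t x + t y disagree. *)
have good s : bad s =1 xpred0 -> aligned (blk B s).
  by move=> nobad x xC b xb; move: (nobad (x, b)); rewrite /bad /= xC xb => /negbFE.
case: (pickP (bad true)) => [[x b] /and3P[/= xC xb txb] | ]; last by exists true; apply: good.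
case: (pickP (bad false)) => [[y c] /and3P[/= yC yc]|]; last by exists false; apply: good.
rewrite blkC => tyc; have [x0 tx0 txb'] := misaligned_swap xC xb txb.
have [y0 ty0] := misaligned_swap yC yc tyc; rewrite negbK => tyc'.
have := t_block (rpredD xC yC); rewrite linearD /=.
rewrite (in_block_add txb' tyc' tx0 ty0) (in_block_add xb yc x0 y0).
by clear; case: b c => [] [].
Qed.

Lemma aligned_block_map E b :
  aligned E -> in_block E =1 in_block B -> #|blk B b| = #|blk E b| ->
  exists g : 'End(vec),
    [/\ {in C, forall x, g (restr (blk B b) x) = restr (blk E b) (t x)},
       (g @: supported (blk B b) = supported (blk E b))%VS
     & (supported (blk B b) :&: lker g = 0)%VS].
Proof.
move=> alE hE cardb.
have [||||g [gf gW gK]] := extend_factor (C := C) (W := supported (blk B b))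
  (W' := supported (blk E b)) (f := linfun (restr (blk B b)))
  (h := (linfun (restr (blk E b)) \o t)%VF).
- by apply/subvP => _ /memv_imgP[x _ ->]; rewrite lfunE restr_supported.
- by apply/subvP => _ /memv_imgP[x _ ->]; rewrite comp_lfunE lfunE restr_supported.
- by rewrite !dim_supported.
- move=> x xC; rewrite comp_lfunE !lfunE /= !restr_eq0_supported -!blkN.
  apply/idP/idP => [/alE -> // | txb].
  have /existsP[c xc] : in_block B x by rewrite -t_block // -hE; apply/existsP; exists (~~ b).
  have [ecb|/eqP ncb] := eqVneq c (~~ b); first by rewrite -ecb.
  have ebc : b = c by clear -ncb; case: b c ncb => [] [].
  have /eqP : t x = 0 by apply: (supported_compl_eq0 (alE x xC c xc)); rewrite -ebc -blkN.
  by rewrite t_eq0 // => /eqP ->; rewrite mem0v.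
by exists g; split => // x xC; have := gf x xC; rewrite comp_lfunE !lfunE.
Qed.

Lemma aligned_isometry E :
  aligned E -> in_block E =1 in_block B -> #|E| = #|B| -> #|~: E| = #|~: B| ->
  exists T, linear_isometry [set B; ~: B] T /\ {in C, T =1 t}.
Proof.
move=> alE hE cardE cardEC.
have card_blk b : #|blk B b| = #|blk E b| by case: b.
have [g gP] := fin_all_exists (fun b => aligned_block_map alE hE (card_blk b)).
pose T := ((g true \o linfun (restr B)) + (g false \o linfun (restr (~: B))))%VF.
have TE b v : T v = g b (restr (blk B b) v) + g (~~ b) (restr (blk B (~~ b)) v).
  by case: b; rewrite /T add_lfunE !comp_lfunE !lfunE // addrC.
have restrT b v : restr (blk E b) (T v) = g b (restr (blk B b) v).
  have [_ gW _] := gP b; have [_ gNW _] := gP (~~ b).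
  rewrite (TE b) restr_add_supported // -?blkN -?gW -?gNW ?memv_img ?restr_supported //.
have T_blk b v : (T v \in supported (blk E b)) = (v \in supported (blk B b)).
  rewrite -[blk E b]setCK -blkN -restr_eq0_supported restrT.
  have [_ _ /lker_cap0_eq0 gK] := gP (~~ b).
  by rewrite gK ?restr_supported // restr_eq0_supported blkN setCK.
exists T; split.
  apply: linear_isometry_compl => v.
    by rewrite (eq0_supported E (T v)) (eq0_supported B v); apply: eq_forallb => b; rewrite T_blk.
  by rewrite -(hE (T v)); apply: eq_existsb => b; rewrite T_blk.
move=> x xC; have [gt _ _] := gP true; have [gf _ _] := gP false.
by rewrite (TE true) gt // gf // restr_add_compl.
Qed.

End Alignment.

Lemma MEP_compl B : #|B| = #|~: B| -> MacWilliams_EP K [set B; ~: B].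
Proof.
move=> cardB C1 C2 t [_ tlin twt].
have [f ft] := linear_on_extend (C := C1) (t := t) tlin.
have f_eq0 : {in C1, forall x, (f x == 0) = (x == 0)}.
  by move=> x xC; rewrite ft // -!(wtF_eq0 (covering_compl B)) twt.
have f_block : {in C1, forall x, in_block B (f x) = in_block B x}.
  by move=> x xC; rewrite ft // -!wtF_le1_compl twt.
have [s al] := exists_aligned f_eq0 f_block.
have [||T [isoT Tf]] := aligned_isometry f_eq0 f_block al (in_block_blk B s).
- by clear al; case: s => //=; rewrite cardB.
- by clear al; case: s; rewrite /= ?setCK // cardB.
by exists T; split => // x xC; rewrite Tf ?ft.
Qed.

Lemma MEP_compl_card_le B :
  B != set0 -> ~: B != set0 -> MacWilliams_EP K [set B; ~: B] -> (#|~: B| <= #|B|)%N.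
Proof.
move=> /set0Pn[b bB] /set0Pn[d dBC] MEP.
pose x : vec := ind [set d]; pose y : vec := ind [set b].
have x0 : x != 0 by rewrite ind_eq0 -card_gt0 cards1.
have y0 : y != 0 by rewrite ind_eq0 -card_gt0 cards1.
have xBC : x \in supported (~: B) by rewrite mem_supported supp_ind sub1set.
have yB : y \in supported B by rewrite mem_supported supp_ind sub1set.
have xblock : in_block B x by apply/existsP; exists false.
have yblock : in_block B y by apply/existsP; exists true.
have wxy : wtF [set B; ~: B] x = wtF [set B; ~: B] y.
  by rewrite !wtF_compl (negbTE x0) (negbTE y0) xblock yblock.
have [T [isoT Txy]] := MEP_wtF_transitive MEP x0 wxy.
have in_block_T w : in_block B w -> in_block B (T w).
  by rewrite -!wtF_le1_compl (isometry_wt isoT).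
have TBC w : w \in supported (~: B) -> T w \in supported B.
  move=> wBC; have /existsP[[] //= TwBC] : in_block B (T w).
    by apply/in_block_T/existsP; exists false.
  have /existsP[[] /= yTw] : in_block B (y + T w).
    by rewrite -Txy -(isometryD isoT); apply/in_block_T/existsP; exists false; rewrite /= rpredD.
  - by rewrite -(addKr y (T w)) rpredD ?rpredN.
  - have : y \in supported (~: B) by rewrite -(addrK (T w) y) rpredB.
    by move/(supported_compl_eq0 yB)/eqP; rewrite (negbTE y0).
have : (#|T @: supported (~: B)| <= #|supported B : {vspace vec}|)%N.
  by apply: subset_leq_card; apply/subsetP => _ /imsetP[w wBC ->]; apply: TBC.
rewrite card_imset; last exact: isometry_inj isoT.
by rewrite !card_vspace !dim_supported leq_exp2l // card_finNzRing_gt1.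
Qed.

Lemma MEP_compl_card_eq B :
  B != set0 -> ~: B != set0 -> MacWilliams_EP K [set B; ~: B] -> #|B| = #|~: B|.
Proof.
move=> B0 BC0 MEP; have MEPC : MacWilliams_EP K [set ~: B; ~: ~: B] by rewrite setCK setUC.
apply/eqP; rewrite eqn_leq (MEP_compl_card_le B0 BC0 MEP) andbT -{1}(setCK B).
by rewrite (MEP_compl_card_le BC0 _ MEPC) // setCK.
Qed.

End ComplementaryBlocks.

(** * Two overlapping blocks *)

Lemma pair_pigeonhole (T : eqType) (p q u v w : T) :
  u = p \/ u = q -> v = p \/ v = q -> w = p \/ w = q -> [|| u == v, u == w | v == w].
Proof. by move=> [] -> [] -> [] ->; rewrite eqxx ?orbT. Qed.

Section Overlap.
Variables (K : finFieldType) (n : nat) (F : {set {set 'I_n}}) (U : {set 'I_n}).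
Hypotheses (covF : is_covering F) (nrF : no_redundant F).
Hypothesis sepU : {in F, forall D : {set 'I_n}, (D \subset U) || (D \subset ~: U)}.
Variables (A B : {set 'I_n}) (c : 'I_n).
Hypotheses (AF : A \in F) (BF : B \in F) (neqAB : A != B) (meetAB : ~~ [disjoint A & B]).
Hypotheses (AU : A \subset U) (cU : c \notin U).
Local Notation vec := 'rV[K]_n.

Let F0 : F != set0. Proof. by apply/set0Pn; exists A. Qed.

Let meet : exists2 a, a \in A & a \in B.
Proof.
have /set0Pn[a /setIP[aA aB]] : A :&: B != set0 by rewrite setI_eq0.
by exists a.
Qed.

Lemma wtF_le1_split (w : vec) :
  (wtF F w <= 1)%N -> (supp w \subset U) || (supp w \subset ~: U).
Proof.
case/(wtF_le1P covF w F0) => D DF swD.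
by case/orP: (sepU DF) => sD; rewrite (subset_trans swD sD) ?orbT.
Qed.

Lemma wtF_ind_overlap : wtF F (ind (A :|: B) : vec) = 2%N.
Proof.
apply/eqP; rewrite eqn_leq (wtF_le2 AF BF) ?supp_ind //= ltnNge.
apply/(wtF_le1P covF _ F0) => -[D DF]; rewrite supp_ind subUset => /andP[sAD sBD].
by move: neqAB; rewrite (no_redundant_eq nrF AF DF sAD) (no_redundant_eq nrF BF DF sBD) eqxx.
Qed.

Lemma wtF_ind_straddle : wtF F (ind (c |: A) : vec) = 2%N.
Proof.
have /bigcupP[C CF cC] : c \in cover F by rewrite (eqP covF) inE.
apply/eqP; rewrite eqn_leq (wtF_le2 CF AF) ?supp_ind ?setSU ?sub1set //= ltnNge.
apply/(wtF_le1P covF _ F0) => -[D DF]; rewrite supp_ind subUset sub1set => /andP[cD sAD].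
case/orP: (sepU DF) => sDU; first by move: cU; rewrite (subsetP sDU).
have [a aA _] := meet; move: (subsetP sDU a (subsetP sAD a aA)).
by rewrite inE (subsetP AU a aA).
Qed.

Lemma MEP_overlap : ~ MacWilliams_EP K F.
Proof.
move=> MEP; pose x : vec := ind (A :|: B); pose y : vec := ind (c |: A).
have [a aA aB] := meet.
have [i iA iNB] : exists2 i, i \in A & i \notin B.
  apply/subsetPn; apply: contra neqAB => sAB; exact/eqP/(no_redundant_eq nrF AF BF).
have x0 : x != 0 by rewrite ind_eq0; apply/set0Pn; exists a; rewrite inE aA.
have [T [isoT Txy]] :=
  MEP_wtF_transitive MEP x0 (etrans wtF_ind_overlap (esym wtF_ind_straddle)).
rewrite -/y in Txy.
have yU : restr U y != 0.
  by rewrite restr_ind ind_eq0; apply/set0Pn; exists a; rewrite !inE (subsetP AU) ?aA ?orbT.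
have yUC : restr (~: U) y != 0.
  by rewrite restr_ind ind_eq0; apply/set0Pn; exists c; rewrite !inE cU eqxx.
have wt_block (D Z : {set 'I_n}) : D \in F -> Z \subset D -> (wtF F (ind Z : vec) <= 1)%N.
  by move=> DF sZD; apply/(wtF_le1P covF _ F0); exists D; rewrite ?supp_ind.
pose phi Z : vec := T (- ind Z).
have phi_inj : injective phi by move=> Z Z' /(isometry_inj isoT)/oppr_inj/ind_inj.
pose p : vec := - restr U y; pose q : vec := - restr (~: U) y.
have phiP (Z D D' : {set 'I_n}) : D \in F -> D' \in F ->
    Z \subset D -> (A :|: B) :\: Z \subset D' -> Z \subset A :|: B ->
    phi Z = p \/ phi Z = q.
  move=> DF D'F sZD sZD' sZAB.
  have wtZ : (wtF F (phi Z) <= 1)%N.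
    by rewrite (isometry_wt isoT) (wtF_supp _ (suppN _)); apply: wt_block DF sZD.
  have wtyZ : (wtF F (y + phi Z) <= 1)%N.
    rewrite -Txy -(isometryD isoT) (isometry_wt isoT) indB //.
    exact: wt_block D'F sZD'.
  exact: split_support_opp yU yUC (wtF_le1_split wtZ) (wtF_le1_split wtyZ).
have [h1 h2 h3] : [/\ phi (A :\: B) = p \/ phi (A :\: B) = q,
                      phi (B :\: A) = p \/ phi (B :\: A) = q
                    & phi A = p \/ phi A = q].
  split; [apply: (phiP _ A B) | apply: (phiP _ B A) | apply: (phiP _ A B)] => //;
  by apply/subsetP => j; rewrite !inE; case: (j \in A); case: (j \in B).
have n12 : A :\: B != B :\: A by apply/eqP => /setP/(_ i); rewrite !inE iA (negbTE iNB).
have n13 : A :\: B != A by apply/eqP => /setP/(_ a); rewrite !inE aA aB.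
have n23 : B :\: A != A by apply/eqP => /setP/(_ i); rewrite !inE iA (negbTE iNB).
have := pair_pigeonhole h1 h2 h3; rewrite !(inj_eq phi_inj).
by rewrite (negbTE n12) (negbTE n13) (negbTE n23).
Qed.

End Overlap.

Lemma MEP_trivIset (K : finFieldType) n (F : {set {set 'I_n}}) :
  is_covering F -> no_redundant F -> set0 \notin F -> #|components F| = 2 ->
  MacWilliams_EP K F -> trivIset F.
Proof.
move=> covF nrF F0n compF MEP; apply/trivIsetP => A B AF BF neqAB.
apply/negPn/negP => meetAB.
have nonempty D : D \in F -> D != set0 by move=> DF; apply: contraNneq F0n => <-.
have [S SC AS] := mem_components AF (nonempty A AF).
have /andP[SF Sconn] := components_connected SC.
have /cards1P[S' eS'] : #|components F :\ S| == 1%N.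
  by move: compF; rewrite (cardsD1 S) SC => /eqP card2; exact: card2.
have /setD1P[neqS'S S'C] : S' \in components F :\ S by rewrite eS' set11.
have [C CS' CS] : exists2 C, C \in S' & C \notin S.
  by apply/subsetPn; apply: contra neqS'S => sS'S; rewrite (components_maximal S'C SF Sconn sS'S).
have CF : C \in F by have /andP[S'F _] := components_connected S'C; apply: (subsetP S'F).
have [c cC] := set0Pn _ (nonempty C CF).
apply: (MEP_overlap (U := cover S) (c := c) covF nrF _ AF BF neqAB meetAB _ _ MEP).
- move=> D DF; case: (boolP (D \in S)) => DS; first by rewrite bigcup_sup.
  by rewrite (component_cover_compl SC DF DS) orbT.
- exact: bigcup_sup.
by have := subsetP (component_cover_compl SC CF CS) c cC; rewrite inE.
Qed.

Unset Implicit Arguments.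
Set Strict Implicit.
Local Close Scope ring_scope.

Theorem proposition9 (K : finFieldType) (n : nat) (F : {set {set 'I_n}}) :
  (0 < n)%N ->
  is_covering F -> no_redundant F -> #|components F| = 2 ->
  (MacWilliams_EP K F <-> exists k : nat, k_partition k F).
Proof.
move=> n_gt0 covF nrF compF.
have [D DF D0] := exists_nonempty_block n_gt0 covF.
have F0 : F != set0 by apply/set0Pn; exists D.
have F0n := no_redundant_set0 nrF DF D0.
have pairF trivF : exists B, F = [set B; ~: B] := trivIset_two_components covF F0 F0n trivF compF.
split => [MEP | [k [partF cardF]]]; last first.
  have [B eF] := pairF (partition_trivIset partF).
  by rewrite eF; apply: MEP_compl; rewrite !cardF // eF !inE eqxx ?orbT.
have trivF := MEP_trivIset covF nrF F0n compF MEP.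
have [B eF] := pairF trivF; rewrite eF in MEP F0n trivF *.
have B0 : B != set0 by apply: contraNneq F0n => <-; rewrite !inE eqxx.
have BC0 : ~: B != set0 by apply: contraNneq F0n => <-; rewrite !inE eqxx orbT.
exists #|B|; split => [|X]; first by apply/and3P; split => //; apply: covering_compl.
by rewrite !inE => /orP[]/eqP->; rewrite // (MEP_compl_card_eq B0 BC0 MEP).
Qed.
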